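(* Let $d\ge 1$ be an integer and let $\mathcal{P}$ be the set of all (nonempty) integer partitions. As formal power series, $$\sum_{\lambda\in\mathcal{P}}t^{\mathrm{dif}_d(\lambda)}x^{\ell(\lambda)}y^{\lambda_1}=\frac{xy}{1-y-tx(1-y^d)-xy^d}.$$ In particular, $$\sum_{\lambda\in\mathcal{P}}t^{\mathrm{dif}_d(\lambda)}x^{\Gamma(\lambda)}=\frac{x}{1-x-tx(1-x^d)-x^{d+1}}.$$
   Context: A partition is a finite nonempty weakly decreasing sequence $\lambda=(\lambda_1,\ldots,\lambda_k)$ of positive integers; $\ell(\lambda)=k$ and $\lambda_1$ is the largest part. The perimeter is $\Gamma(\lambda)=\lambda_1+\ell(\lambda)-1$. $\mathrm{dif}_d(\lambda)=|\{i:1\le i<\ell(\lambda),\ \lambda_i-\lambda_{i+1}<d\}|$. *)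

From HB Require Import structures.
From mathcomp Require Import all_boot all_order all_algebra.
Set Implicit Arguments. Unset Strict Implicit. Unset Printing Implicit Defensive.
Import Order.TTheory GRing.Theory Num.Theory.

Definition is_partition (s : seq nat) : bool :=
  [&& s != [::], sorted geq s & all (fun p => 0 < p) s].

Definition plen (s : seq nat) : nat := size s.
Definition pmax (s : seq nat) : nat := head 0 s.
Definition perim (s : seq nat) : nat := pmax s + plen s - 1.
(* dif_d(lambda) = #{ i : 1 <= i < ell, lambda_i - lambda_{i+1} < d }
   (0-based indices i = 0 .. ell-2 here) *)
Definition dif (d : nat) (s : seq nat) : nat :=
  count (fun i => nth 0 s i - nth 0 s i.+1 < d) (iota 0 (size s).-1).

(* all sequences of length <= B with entries <= B (each listed once);
   every partition with ell <= B and lambda_1 <= B occurs in it *)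
Definition bseqs (B : nat) : seq (seq nat) :=
  flatten [seq [seq map (@nat_of_ord B.+1) (tval t) | t <- enum {: k.-tuple 'I_B.+1}]
          | k <- iota 0 B.+1].

(* f a b c = coefficient of t^a x^b y^c *)
Definition fps3 := nat -> nat -> nat -> int.

Definition add3 (f g : fps3) : fps3 := fun a b c => (f a b c + g a b c)%R.
Definition sub3 (f g : fps3) : fps3 := fun a b c => (f a b c - g a b c)%R.
Definition mul3 (f g : fps3) : fps3 := fun a b c =>
  (\sum_(i < a.+1) \sum_(j < b.+1) \sum_(k < c.+1)
     f i j k * g (a - i)%N (b - j)%N (c - k)%N)%R.
Definition mono3 (a0 b0 c0 : nat) : fps3 := fun a b c =>
  if [&& a == a0, b == b0 & c == c0] then 1%R else 0%R.
Definition one3 : fps3 := mono3 0 0 0.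
Definition T3 : fps3 := mono3 1 0 0.
Definition X3 : fps3 := mono3 0 1 0.
Definition Y3 : fps3 := mono3 0 0 1.
Definition pow3 (f : fps3) (n : nat) : fps3 := iter n (mul3 f) one3.

(* sum_{lambda in P} t^{dif_d lambda} x^{ell lambda} y^{lambda_1}:
   coefficient of t^a x^b y^c = #{lambda : dif_d = a, ell = b, lambda_1 = c} *)
Definition gf3 (d : nat) : fps3 := fun a b c =>
  Posz (count (fun s => [&& is_partition s, dif d s == a, plen s == b & pmax s == c])
         (bseqs (maxn b c))).

Definition den3 (d : nat) : fps3 :=
  sub3 (sub3 (sub3 one3 Y3) (mul3 (mul3 T3 X3) (sub3 one3 (pow3 Y3 d))))
       (mul3 X3 (pow3 Y3 d)).

(* f a b = coefficient of t^a x^b *)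
Definition fps2 := nat -> nat -> int.

Definition sub2 (f g : fps2) : fps2 := fun a b => (f a b - g a b)%R.
Definition mul2 (f g : fps2) : fps2 := fun a b =>
  (\sum_(i < a.+1) \sum_(j < b.+1) f i j * g (a - i)%N (b - j)%N)%R.
Definition mono2 (a0 b0 : nat) : fps2 := fun a b =>
  if (a == a0) && (b == b0) then 1%R else 0%R.
Definition one2 : fps2 := mono2 0 0.
Definition T2 : fps2 := mono2 1 0.
Definition X2 : fps2 := mono2 0 1.
Definition pow2 (f : fps2) (n : nat) : fps2 := iter n (mul2 f) one2.

(* sum_{lambda in P} t^{dif_d lambda} x^{Gamma lambda}:
   coefficient of t^a x^b = #{lambda : dif_d = a, Gamma = b}
   (Gamma = b forces ell <= b+1 and lambda_1 <= b+1) *)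
Definition gf2 (d : nat) : fps2 := fun a b =>
  Posz (count (fun s => [&& is_partition s, dif d s == a & perim s == b])
         (bseqs b.+1)).

Definition den2 (d : nat) : fps2 :=
  sub2 (sub2 (sub2 one2 X2) (mul2 (mul2 T2 X2) (sub2 one2 (pow2 X2 d))))
       (pow2 X2 d.+1).

From mathcomp Require Import all_boot all_order all_algebra zify ring.
From Stdlib Require Import FunctionalExtensionality.
Set Implicit Arguments. Unset Strict Implicit. Unset Printing Implicit Defensive.
Import GRing.Theory.

(* A partition with l+1 parts and largest part c is c :: mu, where mu has l
   parts and largest part m <= c, and dif_d grows by one exactly when c - m < d.
   So if N_l(t, y) = sum t^dif_d(lambda) y^lambda_1 over the partitions with
   l parts, then N_(l+1) = W N_l with W = sum_k w_k y^k, where w_k = t for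
   k < d and w_k = 1 otherwise; since (1 - y) W = t (1 - y^d) + y^d and
   N_1 = y / (1 - y), the first identity follows coefficientwise.  The second
   one is its image under the ring morphism y := x, because
   x^Gamma(lambda) = x^(ell(lambda) + lambda_1) / x. *)

Lemma uniq_flatten_map (T K : eqType) (key : T -> K) (L : K -> seq T) (s : seq K) :
  uniq s -> (forall k, uniq (L k)) -> (forall k x, x \in L k -> key x = k) ->
  uniq (flatten (map L s)).
Proof.
move=> Us UL keyL; elim: s Us => //= k s IH /andP[ks Us].
rewrite cat_uniq UL IH // andbT; apply/hasPn => x /flatten_mapP[k' k's xk'].
by apply: contra ks => /keyL kx; rewrite -kx (keyL _ _ xk').
Qed.

Lemma count_uniq_eq (T : eqType) (P : pred T) s1 s2 :
  uniq s1 -> uniq s2 -> (forall x, P x -> x \in s1) -> (forall x, P x -> x \in s2) ->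
  count P s1 = count P s2.
Proof.
move=> U1 U2 P1 P2; rewrite -(undup_id U1) -(undup_id U2).
by apply: eq_count_undup => x Px; rewrite P1 ?P2.
Qed.

Lemma sum_count_fibers (T : Type) (P : pred T) (f : T -> nat) m s :
  \sum_(j < m) count (fun x => P x && (f x == j)) s = count (fun x => P x && (f x < m)) s.
Proof.
elim: s => [|x s IH] /=; first by rewrite big1.
rewrite big_split IH /=; congr (_ + _); case: (P x) => /=; last by rewrite big1.
transitivity (\sum_(j < m | j == f x :> nat) 1).
  by rewrite [RHS]big_mkcond; apply: eq_bigr => j _; rewrite eq_sym; case: eqP.
by rewrite (big_ord1_eq _ (fun=> 1)); case: (f x < m).
Qed.

Lemma bseqs_uniq B : uniq (bseqs B).
Proof.
apply: (@uniq_flatten_map _ _ size); first exact: iota_uniq.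
  move=> k; rewrite map_inj_uniq ?enum_uniq // => t1 t2 /(inj_map val_inj).
  exact: val_inj.
by move=> k _ /mapP[t _ ->]; rewrite size_map size_tuple.
Qed.

Lemma mem_bseqs B s : size s <= B -> all (fun p => p <= B) s -> s \in bseqs B.
Proof.
move=> sB sleB; apply/flatten_mapP; exists (size s); first by rewrite mem_iota.
apply/mapP; exists (map_tuple (@inord B) (in_tuple s)); first by rewrite mem_enum.
rewrite /= -map_comp -[LHS]map_id; apply/eq_in_map => p ps /=.
by rewrite inordK // ltnS (allP sleB).
Qed.

Lemma is_partition_cons x s : is_partition (x :: s) =
  [&& 0 < x, sorted geq s, all (fun p => 0 < p) s & all (fun p => p <= x) s].
Proof.
rewrite /is_partition /= (path_sortedE (rev_trans leq_trans)).
by case: (0 < x); case: (sorted geq s); case: (all _ s); case: (all _ s).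
Qed.

Lemma partition_in_bseqs B s :
  is_partition s -> plen s <= B -> pmax s <= B -> s \in bseqs B.
Proof.
case: s => [//|x s]; rewrite is_partition_cons /plen /pmax /= => /and4P[_ _ _ sx] sB xB.
apply: mem_bseqs => //=; rewrite xB; apply/allP => p /(allP sx) px.
exact: leq_trans px xB.
Qed.

Lemma dif_cons2 d x y s : dif d [:: x, y & s] = (x - y < d) + dif d (y :: s).
Proof. by rewrite /dif /= -[1](addn0 1) iotaDl count_map. Qed.

Fixpoint decseqs (n m : nat) : seq (seq nat) :=
  if n is n'.+1 then flatten [seq [seq x :: s | s <- decseqs n' x] | x <- iota 1 m]
  else [:: [::]].

Lemma mem_decseqs n m s : (s \in decseqs n m) =
  [&& size s == n, sorted geq s, all (fun p => 0 < p) s & all (fun p => p <= m) s].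
Proof.
elim: n m s => [|n IH] m [|x s] //=.
  by apply/flatten_mapP => -[y _ /mapP[]].
rewrite eqSS (path_sortedE (rev_trans leq_trans)); apply/flatten_mapP/idP.
  move=> [y]; rewrite mem_iota add1n ltnS => /andP[y0 ym] /mapP[t + [-> ->]].
  rewrite IH => /and4P[-> -> -> sley] /=; rewrite sley y0 ym /=.
  by apply/allP => p /(allP sley) /leq_trans; apply.
case/and4P=> /eqP sn /andP[sx ss] /andP[x0 s0] /andP[xm _].
exists x; first by rewrite mem_iota x0 add1n ltnS.
by apply: map_f; rewrite IH sn eqxx ss s0 sx.
Qed.

Lemma decseqs_uniq n m : uniq (decseqs n m).
Proof.
elim: n m => [|n IH] m //=.
apply: (@uniq_flatten_map _ _ (head 0)); first exact: iota_uniq.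
  by move=> k; rewrite map_inj_uniq // => s1 s2 [].
by move=> k _ /mapP[s _ ->].
Qed.

(* The partitions with l parts and largest part c are the c :: s with
   s \in decseqs l.-1 c. *)
Definition npart d a l c : nat :=
  if (l == 0) || (c == 0) then 0 else count (fun s => dif d (c :: s) == a) (decseqs l.-1 c).

Lemma npart_len0 d a c : npart d a 0 c = 0. Proof. by []. Qed.

Lemma npart_max0 d a l : npart d a l 0 = 0. Proof. by rewrite /npart orbT. Qed.

Lemma npart_len1 d a c : npart d a 1 c = (a == 0) && (0 < c).
Proof. by case: c => [|c]; rewrite /npart /dif /= ?andbF // andbT addn0 eq_sym. Qed.

Lemma gf3_npart d a l c : gf3 d a l c = npart d a l c.
Proof.
congr Posz; rewrite /npart; case: ifPn => [l0c0|].
  apply/eqP; rewrite -leqn0 leqNgt -has_count; apply/hasPn => -[|x s] _ //.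
  rewrite is_partition_cons /plen /pmax /=; apply/negP.
  move=> /and4P[/and4P[x0 _ _ _] _ /eqP sl /eqP xc].
  by move: l0c0; rewrite -sl -xc (gtn_eqF x0).
case/norP=> l0 c0; rewrite (@count_uniq_eq _ _ _ (map (cons c) (decseqs l.-1 c))).
- rewrite count_map; apply: eq_in_count => s; rewrite mem_decseqs /plen /pmax /=.
  case/and4P=> /eqP sl ss s0 sc; rewrite is_partition_cons lt0n c0 ss s0 sc sl.
  by rewrite prednK ?lt0n // !eqxx !andbT.
- exact: bseqs_uniq.
- by rewrite map_inj_uniq ?decseqs_uniq // => s1 s2 [].
- move=> s /and4P[sP _ /eqP sl /eqP sc]; apply: partition_in_bseqs => //.
    by rewrite sl leq_maxl.
  by rewrite sc leq_maxr.
- move=> [|x s] //; rewrite is_partition_cons.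
  move=> /and4P[/and4P[x0 ss s0 sx] _ /eqP sl /eqP xc]; rewrite /plen /pmax /= in sl xc.
  by rewrite -xc; apply: map_f; rewrite mem_decseqs -sl eqxx ss s0 sx.
Qed.

Lemma npart_rec d a l c : npart d a l.+2 c =
  \sum_(0 <= m < c.+1) (if c - m < d then (if 0 < a then npart d (a - 1) l.+1 m else 0)
                         else npart d a l.+1 m).
Proof.
rewrite big_nat_recl // !npart_max0 !if_same add0n /npart /=.
case: eqP => [->|_]; first by rewrite big_geq.
have -> : iota 1 c = index_iota 1 c.+1 by rewrite /index_iota subn1.
rewrite count_flatten sumnE !big_map big_add1 /=; apply: eq_bigr => m _.
rewrite count_map /=; case: ltnP => w; last first.
  by apply: eq_count => s; rewrite /= dif_cons2 ltnNge w.
case: a => [|a] /=.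
  by rewrite (@eq_count _ _ pred0) ?count_pred0 // => s; rewrite /= dif_cons2 w.
by apply: eq_count => s; rewrite /= dif_cons2 w add1n eqSS subn1.
Qed.

Section FiniteSums.
Local Open Scope ring_scope.

Lemma sum_window_diff (V : zmodType) (d c : nat) (A B : nat -> V) : (0 < d)%N ->
  \sum_(0 <= m < c.+2) (if (c.+1 - m < d)%N then A m else B m)
  - \sum_(0 <= m < c.+1) (if (c - m < d)%N then A m else B m)
  = A c.+1 + (if (d <= c.+1)%N then B (c.+1 - d)%N - A (c.+1 - d)%N else 0).
Proof.
move=> d0; rewrite big_nat_recr //= subnn d0 addrAC -sumrB (addrC _ (A _)); congr (_ + _).
transitivity (\sum_(0 <= m < c.+1 | m == (c.+1 - d)%N)
                (if (d <= c.+1)%N then B m - A m else 0)).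
  rewrite [RHS]big_mkcond; apply: eq_big_nat => m /andP[_ mc].
  by repeat case: ifP => ?; rewrite ?subrr //; exfalso; lia.
by rewrite big_nat1_eq ltn_subrL d0.
Qed.

Lemma sum_rev_delta (R : pzSemiRingType) n k (F : nat -> R) :
  \sum_(m < n.+1) ((n - m)%N == k)%:R * F m = if (k <= n)%N then F (n - k)%N else 0.
Proof.
rewrite (reindex_inj rev_ord_inj) /=.
under eq_bigr => m _ do rewrite subKn ?leq_ord // mulr_natl mulrb.
by rewrite -big_mkcond (big_ord1_eq _ (fun m => F (n - m)%N)) ltnS.
Qed.

Lemma sum_ord_geq (V : nmodType) n j (h : nat -> V) : (j <= n)%N ->
  \sum_(m < n.+1 | (j <= m)%N) h m = \sum_(k < (n - j).+1) h (j + k)%N.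
Proof.
move=> jn; rewrite -(big_geq_mkord j n.+1 xpredT) -{1}[j]add0n big_addn subSn // big_mkord.
by apply: eq_bigr => k _; rewrite addnC.
Qed.

Lemma sum_triangle (V : nmodType) n (H : nat -> nat -> nat -> V) :
  \sum_(m < n.+1) \sum_(j < m.+1) H j (m - j)%N m
  = \sum_(j < n.+1) \sum_(k < (n - j).+1) H j k (j + k)%N.
Proof.
transitivity (\sum_(m < n.+1) \sum_(j < n.+1 | (j <= m)%N) H j (m - j)%N m).
  by apply: eq_bigr => m _; rewrite (big_ord_narrow_leq (ltnSE (ltn_ord m))).
rewrite (exchange_big_dep xpredT) //=; apply: eq_bigr => j _.
rewrite (sum_ord_geq (fun m => H j (m - j)%N m) (ltnSE (ltn_ord j))).
by apply: eq_bigr => k _; rewrite addKn.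
Qed.

Lemma sum_triangle_exchange (V : nmodType) n (H : nat -> nat -> V) :
  \sum_(i < n.+1) \sum_(j < (n - i).+1) H i j = \sum_(j < n.+1) \sum_(i < (n - j).+1) H i j.
Proof.
transitivity (\sum_(i < n.+1) \sum_(j < n.+1 | (j <= n - i)%N) H i j).
  by apply: eq_bigr => i _; rewrite (big_ord_narrow_leq (leq_subr i n)).
rewrite (exchange_big_dep xpredT) //=; apply: eq_bigr => j _.
transitivity (\sum_(i < n.+1 | (i <= n - j)%N) H i j).
  by apply: eq_bigl => i; have := ltn_ord i; have := ltn_ord j; lia.
by rewrite (big_ord_narrow_leq (leq_subr j n)).
Qed.

Lemma sum_diag_conv (R : pzSemiRingType) (F G : nat -> nat -> R) n :
  \sum_(j < n.+1) \sum_(j1 < j.+1) \sum_(k1 < (n - j).+1) F j1 k1 * G (j - j1)%N (n - j - k1)%N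
  = \sum_(m < n.+1) (\sum_(j1 < m.+1) F j1 (m - j1)%N)
                    * (\sum_(j2 < (n - m).+1) G j2 (n - m - j2)%N).
Proof.
rewrite (sum_triangle _ (fun j1 j2 m => \sum_(k1 < (n - m).+1) F j1 k1 * G j2 (n - m - k1)%N)).
under [RHS]eq_bigr => m _ do rewrite big_distrlr /=.
rewrite (sum_triangle _ (fun j1 k m => \sum_(j2 < (n - m).+1) F j1 k * G j2 (n - m - j2)%N)).
apply: eq_bigr => p _ /=.
under eq_bigr => q _ do rewrite !subnDA.
under [RHS]eq_bigr => k _ do rewrite !subnDA.
rewrite (sum_triangle_exchange _ (fun q k => F p k * G q (n - p - q - k)%N)).
by apply: eq_bigr => k _; apply: eq_bigr => q _; rewrite (subnAC (n - p)%N q k).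
Qed.

End FiniteSums.

Section PowerSeries.
Local Open Scope ring_scope.

Lemma mono3E i j k a b c : mono3 i j k a b c = (a == i)%:R * (b == j)%:R * (c == k)%:R.
Proof. by rewrite /mono3; do 3!case: eqP => _ /=; rewrite ?mulr1 ?mulr0 ?mul0r. Qed.

Lemma mul3_mono (f : fps3) i j k a b c :
  mul3 f (mono3 i j k) a b c =
  if [&& (i <= a)%N, (j <= b)%N & (k <= c)%N] then f (a - i)%N (b - j)%N (c - k)%N else 0.
Proof.
transitivity (\sum_(i' < a.+1) ((a - i')%N == i)%:R * \sum_(j' < b.+1) ((b - j')%N == j)%:R
                * \sum_(k' < c.+1) ((c - k')%N == k)%:R * f i' j' k').
  apply: eq_bigr => i' _; rewrite mulr_sumr; apply: eq_bigr => j' _.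
  rewrite !mulr_sumr; apply: eq_bigr => k' _; rewrite mono3E; ring.
under eq_bigr => i' _ do under eq_bigr => j' _ do rewrite (sum_rev_delta _ _ (f i' j')).
under eq_bigr => i' _ do rewrite (sum_rev_delta _ _ (fun j' =>
  if (k <= c)%N then f i' j' (c - k)%N else 0)).
rewrite (sum_rev_delta _ _ (fun i' =>
  if (j <= b)%N then if (k <= c)%N then f i' (b - j)%N (c - k)%N else 0 else 0)).
by case: (i <= a)%N; case: (j <= b)%N; case: (k <= c)%N.
Qed.

Lemma mul3_subr (f g h : fps3) : mul3 f (sub3 g h) = sub3 (mul3 f g) (mul3 f h).
Proof.
do 3!apply: functional_extensionality => ?.
rewrite /mul3 /sub3 -sumrB; apply: eq_bigr => i _; rewrite -sumrB.
by apply: eq_bigr => j _; rewrite -sumrB; apply: eq_bigr => k _; rewrite mulrBr.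
Qed.

Lemma mono3_mul i j k i' j' k' :
  mul3 (mono3 i j k) (mono3 i' j' k') = mono3 (i + i') (j + j') (k + k').
Proof.
do 3!apply: functional_extensionality => ?.
by rewrite mul3_mono /mono3; repeat case: ifP => ?; rewrite //; exfalso; lia.
Qed.

Lemma pow3Y n : pow3 Y3 n = mono3 0 0 n.
Proof. by elim: n => [|n IH] //=; rewrite -/(pow3 Y3 n) IH mono3_mul. Qed.

Lemma den3E d : den3 d =
  sub3 (sub3 (sub3 one3 Y3) (sub3 (mono3 1 1 0) (mono3 1 1 d))) (mono3 0 1 d).
Proof. by rewrite /den3 pow3Y !mono3_mul mul3_subr !mono3_mul. Qed.

Lemma npart_den3_coef d a l c : (0 < d)%N ->
  (npart d a l c)%:Z - (if (0 < c)%N then (npart d a l (c - 1)%N)%:Z else 0)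
  - ((if (0 < a)%N && (0 < l)%N then (npart d (a - 1)%N (l - 1)%N c)%:Z else 0)
     - (if [&& (0 < a)%N, (0 < l)%N & (d <= c)%N]
        then (npart d (a - 1)%N (l - 1)%N (c - d)%N)%:Z else 0))
  - (if (0 < l)%N && (d <= c)%N then (npart d a (l - 1)%N (c - d)%N)%:Z else 0)
  = mono3 0 1 1 a l c.
Proof.
move=> d0; case: l => [|[|l]].
- by rewrite !npart_len0 !if_same /mono3 /= andbF.
- rewrite subnn !npart_len0 !if_same !subr0 !npart_len1 /mono3 /=.
  by case: a => [|a]; case: c => [|[|c]].
rewrite /mono3 /= !subSS !subn0 andbF.
case: c => [|c]; first by rewrite !npart_max0 !if_same.
have rec m : (npart d a l.+2 m)%:Z = \sum_(0 <= k < m.+1) (if (m - k < d)%N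
    then (if (0 < a)%N then npart d (a - 1)%N l.+1 k else 0)%:Z else (npart d a l.+1 k)%:Z).
  rewrite npart_rec -natz natr_sum; apply: eq_bigr => k _.
  by rewrite natz; case: ifP => //; case: ifP.
rewrite !{}rec subSS subn0 sum_window_diff //.
by case: a => [|a]; case: (d <= c.+1)%N => /=; rewrite ?subn0 ?subn1; ring.
Qed.

Lemma gf3_den3 d : (0 < d)%N -> mul3 (gf3 d) (den3 d) = mul3 X3 Y3.
Proof.
move=> d0; do 3!apply: functional_extensionality => ?.
rewrite /X3 /Y3 mono3_mul den3E !mul3_subr /sub3 /one3 !mul3_mono /=.
by rewrite !subn0 !gf3_npart andbT npart_den3_coef.
Qed.

Definition substYX (f : fps3) : fps2 := fun a n => \sum_(j < n.+1) f a j (n - j)%N.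

Lemma substYX_mul3 f g : substYX (mul3 f g) = mul2 (substYX f) (substYX g).
Proof.
do 2!apply: functional_extensionality => ?.
rewrite /substYX /mul2 /mul3 exchange_big /=.
by apply: eq_bigr => i _; rewrite sum_diag_conv.
Qed.

Lemma substYX_sub3 f g : substYX (sub3 f g) = sub2 (substYX f) (substYX g).
Proof. do 2![apply: functional_extensionality => ?]; exact: sumrB. Qed.

Lemma substYX_mono3 i j k : substYX (mono3 i j k) = mono2 i (j + k).
Proof.
apply: functional_extensionality => a; apply: functional_extensionality => n.
rewrite /substYX /mono3 /mono2; case: eqP => _ /=; last by rewrite big1.
rewrite -big_mkcond big_mkcondr (big_ord1_eq _ (fun m => if (n - m == k)%N then 1 else 0)).
by rewrite ltnS; repeat case: ifP => ?; lia.
Qed.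

Lemma substYX_pow3Y n : substYX (pow3 Y3 n) = pow2 X2 n.
Proof.
elim: n => [|n IH]; first exact: substYX_mono3.
by rewrite /= -/(pow3 Y3 n) -/(pow2 X2 n) substYX_mul3 IH substYX_mono3.
Qed.

Lemma substYX_den3 d : substYX (den3 d) = den2 d.
Proof.
by rewrite /den3 !(substYX_sub3, substYX_mul3) substYX_pow3Y !substYX_mono3.
Qed.

Lemma gf2_substYX d a n : gf2 d a n = substYX (gf3 d) a n.+1.
Proof.
pose Q s := [&& is_partition s, dif d s == a & (pmax s + plen s == n.+1)%N].
transitivity (\sum_(j < n.+2) (count (fun s => Q s && (plen s == j)) (bseqs n.+1))%:Z).
  under eq_bigr => j _ do rewrite -natz.
  rewrite -natr_sum natz sum_count_fibers; congr Posz; apply: eq_count => s.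
  rewrite /Q /perim; case: s => [|x s] //=.
  by case: (is_partition _); case: (dif d _ == a) => //=; lia.
apply: eq_bigr => j _; congr Posz; have jn := ltn_ord j.
transitivity (count (fun s =>
  [&& is_partition s, dif d s == a, plen s == j & pmax s == (n.+1 - j)%N]) (bseqs n.+1)).
  apply: eq_count => s; rewrite /Q.
  by case: (is_partition s); case: (dif d s == a) => //=; lia.
apply: count_uniq_eq; try exact: bseqs_uniq.
- move=> s /and4P[sP _ /eqP sl /eqP sc]; apply: partition_in_bseqs; rewrite ?sl ?sc //.
  exact: leq_subr.
- move=> s /and4P[sP _ /eqP sl /eqP sc]; apply: partition_in_bseqs => //.
    by rewrite sl leq_maxl.
  by rewrite sc leq_maxr.
Qed.

Lemma mul2_shiftl (f g : fps2) a n : (forall a, f a 0%N = 0) ->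
  mul2 (fun a m => f a m.+1) g a n = mul2 f g a n.+1.
Proof.
move=> f0; apply: eq_bigr => i _.
by rewrite [RHS]big_ord_recl f0 mul0r add0r; apply: eq_bigr => j _; rewrite lift0 subSS.
Qed.

Lemma gf2_den2 d : (0 < d)%N -> mul2 (gf2 d) (den2 d) = X2.
Proof.
move=> d0; do 2!apply: functional_extensionality => ?.
have -> : gf2 d = fun a n => substYX (gf3 d) a n.+1.
  by do 2!apply: functional_extensionality => ?; exact: gf2_substYX.
rewrite mul2_shiftl; last by move=> a; rewrite /substYX big_ord1 /= gf3_npart.
by rewrite -substYX_den3 -substYX_mul3 gf3_den3 // /X3 /Y3 mono3_mul substYX_mono3.
Qed.

End PowerSeries.

(* Both denominators have constant term 1, hence are invertible formal power
   series; "F = N / D" is stated as "F * D = N". *)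
Theorem lemma3p2 (d : nat) (hd : (1 <= d)%N) :
  (forall a b c : nat, mul3 (gf3 d) (den3 d) a b c = mul3 X3 Y3 a b c) /\
  (forall a b : nat, mul2 (gf2 d) (den2 d) a b = X2 a b).
Proof. by split=> *; rewrite ?gf3_den3 ?gf2_den2. Qed.
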